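(* Let $\mu_1,\ldots,\mu_n$ be continuous probability measures on $\mathbb{R}^n$ and $\alpha_1,\ldots,\alpha_n\in(0,1)$ such that for all $i$ and all $v\in S^{n-1}$ there is a unique $\lambda\in\mathbb{R}$ with $\mu_i(H^+_{v,\lambda})=\alpha_i$. Let $f_i:S^{n-1}\to\mathbb{R}^n$ ($i\in[n]$) be functions with $\mu_i\big(H^+_{v,\langle v,f_i(v)\rangle}\big)=\alpha_i$ for all $i$ and all $v\in S^{n-1}$. Then there is a hyperplane $H$ with $\mu_i(H^+)=\alpha_i$ for all $i\in[n]$ if and only if there exist $v\in S^{n-1}$ and a hyperplane $H$ with normal $v$ such that $f_i(v)\in H$ for all $i\in[n]$. *)

From HB Require Import structures.
From mathcomp Require Import all_boot all_order all_algebra.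
From mathcomp Require Import all_classical all_reals all_analysis.
Set Implicit Arguments. Unset Strict Implicit. Unset Printing Implicit Defensive.
Import Order.TTheory GRing.Theory Num.Theory.
Import numFieldNormedType.Exports.
Local Open Scope ring_scope.
Local Open Scope classical_set_scope.

Definition Rn_open (R : realType) (n : nat) : set_system 'rV[R]_n := open.

(* R^n equipped with its Borel sigma-algebra *)
Definition Rn (R : realType) (n : nat) := g_sigma_algebraType (@Rn_open R n).

Definition dotp (R : realType) (n : nat) (x y : 'rV[R]_n) : R :=
  \sum_(i < n) x ord0 i * y ord0 i.

Definition sphere (R : realType) (n : nat) : set 'rV[R]_n :=
  [set v | dotp v v = 1].

Definition hyperplane (R : realType) (n : nat) (v : 'rV[R]_n) (lam : R)
  : set (Rn R n) := [set x | dotp x v = lam].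

Definition halfspace (R : realType) (n : nat) (v : 'rV[R]_n) (lam : R)
  : set (Rn R n) := [set x | lam <= dotp x v].

Definition continuous_measure (R : realType) (n : nat)
  (mu : probability (Rn R n) R) : Prop :=
  forall (v : 'rV[R]_n) (lam : R), v != 0 -> mu (hyperplane v lam) = 0%E.

From HB Require Import structures.
From mathcomp Require Import all_boot all_order all_algebra.
From mathcomp Require Import all_classical all_reals all_analysis.
Import Order.TTheory GRing.Theory Num.Theory.
Import numFieldNormedType.Exports.
Local Open Scope ring_scope.
Local Open Scope classical_set_scope.

(* Since the level cutting off mass alpha_i in direction v is unique, it must be
   <v, f_i(v)>; so H^+_{v,lam} cuts off the prescribed masses exactly when every
   f_i(v) lies on H_{v,lam}. *)

Lemma dotpC (R : realType) (n : nat) (x y : 'rV[R]_n) : dotp x y = dotp y x.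
Proof. by rewrite /dotp; apply: eq_bigr => i _; rewrite mulrC. Qed.

Lemma mem_hyperplane (R : realType) (n : nat) (v x : 'rV[R]_n) (lam : R) :
  x \in hyperplane v lam <-> dotp v x = lam.
Proof. by rewrite inE /hyperplane /= dotpC; split. Qed.

Lemma halfspace_mass_on_hyperplane (R : realType) (n : nat)
    (mu : probability (Rn R n) R) (a : R) (v x : 'rV[R]_n) (lam : R) :
  (exists! l : R, mu (halfspace v l) = a%:E) ->
  mu (halfspace v (dotp v x)) = a%:E ->
  mu (halfspace v lam) = a%:E <-> x \in hyperplane v lam.
Proof.
move=> [l [_ l_uniq]] x_spec; rewrite mem_hyperplane; split.
- by move=> lam_spec; rewrite -(l_uniq _ lam_spec) -(l_uniq _ x_spec).
- by move <-.
Qed.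

Theorem mainTheorem2 (R : realType) (n : nat)
  (mu : 'I_n -> probability (Rn R n) R) (alpha : 'I_n -> R)
  (f : 'I_n -> 'rV[R]_n -> 'rV[R]_n)
  (mu_cont : forall i, continuous_measure (mu i))
  (alpha_in : forall i, 0 < alpha i < 1)
  (uniq_lam : forall i (v : 'rV[R]_n), sphere v ->
     exists! lam : R, mu i (halfspace v lam) = (alpha i)%:E)
  (f_spec : forall i (v : 'rV[R]_n), sphere v ->
     mu i (halfspace v (dotp v (f i v))) = (alpha i)%:E) :
  (exists (v : 'rV[R]_n) (lam : R), sphere v /\
     forall i, mu i (halfspace v lam) = (alpha i)%:E)
  <->
  (exists (v : 'rV[R]_n) (lam : R), sphere v /\
     forall i, f i v \in hyperplane v lam).
Proof.
have cut_iff v lam i : sphere v ->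
    mu i (halfspace v lam) = (alpha i)%:E <-> f i v \in hyperplane v lam.
  by move=> sv; apply: halfspace_mass_on_hyperplane; [apply: uniq_lam|apply: f_spec].
split; move=> [v [lam [sv Hv]]]; exists v, lam; split=> // i.
- by apply/(cut_iff v lam i sv).
- by apply/(cut_iff v lam i sv).
Qed.
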